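(* Let $\mathcal{X}=\{1,\dots,n\}$, let $\pi$ be a strictly positive probability distribution on $\mathcal{X}$ and let $P$ be a $\pi$-reversible transition matrix. For every $S\subset\mathcal{X}$ with $S\neq\emptyset,\mathcal{X}$ (and $S'=\mathcal{X}\setminus S$), $$g(S):=\frac{1}{\pi(S)\pi(S')}\sum_{x\in S,\,y\in S'}\pi(x)P(x,y)=f_1(S)-f_2(S)-f_3(S),$$ where $f_1(S)=\frac{1}{\pi(S)\pi(S')}-2$, $f_2(S)=\frac{1}{\pi(S)}\sum_{x,y\in S'}\pi(x)P(x,y)$, $f_3(S)=\frac{1}{\pi(S')}\sum_{x,y\in S}\pi(x)P(x,y)$; moreover each of $f_1,f_2,f_3$ is supermodular on $\{S\subseteq\mathcal{X}:0<\pi(S)<1\}$.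
   Context: $\pi$-reversible means $\pi(x)P(x,y)=\pi(y)P(y,x)$. A set function $f$ is submodular if $f(A\cap B)+f(A\cup B)\le f(A)+f(B)$ for all $A,B$ in its domain, and supermodular if $-f$ is submodular. *)

From HB Require Import structures.
From mathcomp Require Import all_boot all_order all_algebra.
Set Implicit Arguments. Unset Strict Implicit. Unset Printing Implicit Defensive.
Import Order.TTheory GRing.Theory Num.Theory.
Local Open Scope ring_scope.

(* State space X = 'I_n = {0,...,n-1} (relabelling of {1,...,n}). *)

Definition pos_prob_dist (R : realFieldType) (n : nat) (pi : 'I_n -> R) : Prop :=
  (forall x, 0 < pi x) /\ \sum_(x < n) pi x = 1.

Definition transition_matrix (R : realFieldType) (n : nat) (P : 'M[R]_n) : Prop :=
  (forall x y, 0 <= P x y) /\ (forall x, \sum_(y < n) P x y = 1).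

Definition reversible (R : realFieldType) (n : nat) (pi : 'I_n -> R) (P : 'M[R]_n) : Prop :=
  forall x y, pi x * P x y = pi y * P y x.

Definition piS (R : realFieldType) (n : nat) (pi : 'I_n -> R) (S : {set 'I_n}) : R :=
  \sum_(x in S) pi x.

Definition flow (R : realFieldType) (n : nat) (pi : 'I_n -> R) (P : 'M[R]_n)
  (A B : {set 'I_n}) : R :=
  \sum_(x in A) \sum_(y in B) pi x * P x y.

Definition g_fun (R : realFieldType) (n : nat) (pi : 'I_n -> R) (P : 'M[R]_n)
  (S : {set 'I_n}) : R :=
  (piS pi S * piS pi (~: S))^-1 * flow pi P S (~: S).

Definition f1 (R : realFieldType) (n : nat) (pi : 'I_n -> R) (S : {set 'I_n}) : R :=
  (piS pi S * piS pi (~: S))^-1 - 2.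

Definition f2 (R : realFieldType) (n : nat) (pi : 'I_n -> R) (P : 'M[R]_n)
  (S : {set 'I_n}) : R :=
  (piS pi S)^-1 * flow pi P (~: S) (~: S).

Definition f3 (R : realFieldType) (n : nat) (pi : 'I_n -> R) (P : 'M[R]_n)
  (S : {set 'I_n}) : R :=
  (piS pi (~: S))^-1 * flow pi P S S.

Definition supermodular_on (R : realFieldType) (T : finType)
  (D : {set T} -> Prop) (f : {set T} -> R) : Prop :=
  forall A B, D A -> D B -> D (A :&: B) -> D (A :|: B) ->
    f A + f B <= f (A :&: B) + f (A :|: B).

Definition dom01 (R : realFieldType) (n : nat) (pi : 'I_n -> R) (S : {set 'I_n}) : Prop :=
  0 < piS pi S < 1.

(* With a = pi(S), Q = flow(S, S'), stochasticity gives flow(S, S) = a - Q and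
   reversibility gives flow(S', S') = (1 - a) - Q, so the identity reduces to
   1 - 2a(1 - a) - a^2 - (1 - a)^2 = 0.
   Supermodularity: pi is modular and t |-> 1/t is convex, so the modular spread
   pi(A :&: B) <= pi(A), pi(B) <= pi(A :|: B) makes 1/pi(S) supermodular, and so
   is 1/pi(S') since complementation swaps meets and joins; flow(S, S) sums a
   nonnegative weight over S x S, where (A x A) :&: (B x B) = (A :&: B)^2 and
   (A x A) :|: (B x B) is contained in (A :|: B)^2; finally, products of
   nonnegative nondecreasing supermodular functions are supermodular. *)

From HB Require Import structures.
From mathcomp Require Import all_boot all_order all_algebra.
From mathcomp Require Import ring lra.
Import Order.TTheory GRing.Theory Num.Theory.
Local Open Scope ring_scope.

Section SetSums.
Context {R : numDomainType}.

Lemma ler_sum_subset (T : finType) (A B : {set T}) (F : T -> R) :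
  A \subset B -> (forall x, 0 <= F x) -> \sum_(x in A) F x <= \sum_(x in B) F x.
Proof.
move=> /setIidPr sAB F_ge0; rewrite (big_setID (A := B) A) /= sAB.
by rewrite lerDl sumr_ge0.
Qed.

Lemma sum_setIU (T : finType) (A B : {set T}) (F : T -> R) :
  \sum_(x in A) F x + \sum_(x in B) F x =
  \sum_(x in A :&: B) F x + \sum_(x in A :|: B) F x.
Proof.
rewrite (big_setID (A := B) A) [in RHS](big_setID (A := A :|: B) A) /=.
by rewrite setUK setDUl setDv set0U setIC addrCA.
Qed.

Lemma double_sum_setX (T : finType) (A : {set T}) (w : T -> T -> R) :
  \sum_(x in A) \sum_(y in A) w x y = \sum_(p in setX A A) w p.1 p.2.
Proof. by rewrite pair_big; apply: eq_bigl => -[x y]; rewrite in_setX. Qed.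

Context {T : finType} {w : T -> T -> R}.
Implicit Types A B : {set T}.
Hypothesis w_ge0 : forall x y, 0 <= w x y.

Lemma square_sum_ge0 A : 0 <= \sum_(x in A) \sum_(y in A) w x y.
Proof. by apply: sumr_ge0 => x _; apply: sumr_ge0. Qed.

Lemma square_sum_subset A B : A \subset B ->
  \sum_(x in A) \sum_(y in A) w x y <= \sum_(x in B) \sum_(y in B) w x y.
Proof.
move=> sAB; rewrite !double_sum_setX.
by apply: ler_sum_subset => [|[x y]]; first exact: setXS.
Qed.

Lemma square_sum_supermodular A B :
  \sum_(x in A) \sum_(y in A) w x y + \sum_(x in B) \sum_(y in B) w x y <=
  \sum_(x in A :&: B) \sum_(y in A :&: B) w x y +
  \sum_(x in A :|: B) \sum_(y in A :|: B) w x y.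
Proof.
rewrite !double_sum_setX sum_setIU.
have -> : setX A A :&: setX B B = setX (A :&: B) (A :&: B).
  apply/setP => -[x y]; rewrite !inE.
  by case: (x \in A) (x \in B) (y \in A) (y \in B) => [] [] [] [].
rewrite lerD2l; apply: ler_sum_subset => [|[x y]] //.
by rewrite subUset !setXS ?subsetUl ?subsetUr.
Qed.

End SetSums.

Lemma lerD_inv_spread (R : realFieldType) (x y a b : R) :
  0 < x -> x <= a -> x <= b -> a + b = x + y -> a^-1 + b^-1 <= x^-1 + y^-1.
Proof.
move=> x_gt0 xa xb spread.
have ab_gt0 : 0 < a * b by rewrite mulr_gt0 //; lra.
have xy_gt0 : 0 < x * y by rewrite mulr_gt0 //; lra.
have xy_le_ab : x * y <= a * b.
  (* a b - x y = (a - x) (b - x) *)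
  have -> : y = a + b - x by lra.
  nra.
have inv_sum (c d : R) : c * d != 0 -> c^-1 + d^-1 = (c + d) / (c * d).
  by rewrite mulf_eq0 negb_or => /andP[c_neq0 d_neq0]; field; apply/andP.
rewrite !inv_sum ?gt_eqF // spread ler_pM2l; last lra.
by rewrite lef_pV2 ?posrE.
Qed.

Lemma ler_mul_spread (R : realDomainType) (fI fA fB fU gI gA gB gU : R) :
  0 <= fI -> fI <= fA -> fI <= fB -> fA + fB <= fI + fU ->
  0 <= gI -> gI <= gA -> gI <= gB -> gA + gB <= gI + gU ->
  fA * gA + fB * gB <= fI * gI + fU * gU.
Proof.
move=> fI_ge0 fIA fIB f_spread gI_ge0 gIA gIB g_spread.
(* fA gA + fB gB - fI gI = (fA + fB - fI) (gA + gB - gI) - cross *)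
have excess : (fA + fB - fI) * (gA + gB - gI) <= fU * gU.
  by rewrite ler_pM //; lra.
have cross : 0 <= (fA - fI) * (gB - gI) + (fB - fI) * (gA - gI).
  by rewrite addr_ge0 // mulr_ge0 // subr_ge0.
lra.
Qed.

Section Supermodular.
Context {R : realFieldType} {T : finType} {D : {set T} -> Prop}.

Lemma supermodular_on_setC {f : {set T} -> R} :
  (forall S, D S -> D (~: S)) -> supermodular_on D f ->
  supermodular_on D (fun S => f (~: S)).
Proof.
move=> DC f_super A B dA dB dI dU /=.
rewrite [X in _ <= X]addrC setCI setCU.
by apply: f_super; rewrite -?setCI -?setCU; apply: DC.
Qed.

Lemma supermodular_onM (f g : {set T} -> R) :
  (forall S, D S -> 0 <= f S) -> (forall S, D S -> 0 <= g S) ->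
  (forall A B, D A -> D B -> A \subset B -> f A <= f B) ->
  (forall A B, D A -> D B -> A \subset B -> g A <= g B) ->
  supermodular_on D f -> supermodular_on D g ->
  supermodular_on D (fun S => f S * g S).
Proof.
move=> f_ge0 g_ge0 f_mono g_mono f_super g_super A B dA dB dI dU /=.
by apply: ler_mul_spread;
  rewrite ?f_ge0 ?g_ge0 ?f_mono ?g_mono ?f_super ?g_super ?subsetIl ?subsetIr.
Qed.

End Supermodular.

Section ReversibleChain.
Variables (R : realFieldType) (n : nat) (pi : 'I_n -> R) (P : 'M[R]_n).
Hypotheses (pi_dist : pos_prob_dist pi) (P_stoch : transition_matrix P).
Hypothesis P_rev : reversible pi P.
Implicit Types A B S : {set 'I_n}.

Lemma flow_weight_ge0 x y : 0 <= pi x * P x y.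
Proof. by apply: mulr_ge0; [apply/ltW/pi_dist.1 | apply: P_stoch.1]. Qed.

Lemma piS_subset A B : A \subset B -> piS pi A <= piS pi B.
Proof. by move=> sAB; apply: ler_sum_subset => // x; apply/ltW/pi_dist.1. Qed.

Lemma piS_setC S : piS pi (~: S) = 1 - piS pi S.
Proof.
suff : piS pi S + piS pi (~: S) = 1 by lra.
rewrite -pi_dist.2 [RHS](bigID [in S]) /=; congr (_ + _).
by apply: eq_bigl => x; rewrite in_setC.
Qed.

Lemma dom01_setC S : dom01 pi S -> dom01 pi (~: S).
Proof. by rewrite /dom01 piS_setC => /andP[S_gt0 S_lt1]; apply/andP; split; lra. Qed.

Lemma dom01_proper S : S != set0 -> S != setT -> dom01 pi S.
Proof.
have piS_gt0 A : A != set0 -> 0 < piS pi A.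
  case/set0Pn => x xA; rewrite /piS (bigD1 x) //= ltr_pwDl ?pi_dist.1 //.
  by apply: sumr_ge0 => y _; apply/ltW/pi_dist.1.
move=> S_neq0 S_neqT; rewrite /dom01 piS_gt0 //=.
have : 0 < piS pi (~: S) by rewrite piS_gt0 // -setCT (inj_eq (@setC_inj _)).
by rewrite piS_setC; lra.
Qed.

Lemma flow_row_split S : flow pi P S S + flow pi P S (~: S) = piS pi S.
Proof.
rewrite /flow /piS -big_split /=; apply: eq_bigr => x _.
rewrite -[RHS]mulr1 -(P_stoch.2 x) mulr_sumr [RHS](bigID [in S]) /=.
by congr (_ + _); apply: eq_bigl => y; rewrite in_setC.
Qed.

Lemma flow_setC_sym S : flow pi P (~: S) S = flow pi P S (~: S).
Proof.
rewrite /flow exchange_big /=.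
by apply: eq_bigr => y _; apply: eq_bigr => x _; apply: P_rev.
Qed.

Lemma g_fun_decomposition S : dom01 pi S ->
  g_fun pi P S = f1 pi S - f2 pi P S - f3 pi P S.
Proof.
move=> /andP[S_gt0 S_lt1].
have flowSS := flow_row_split S; have flowCC := flow_row_split (~: S).
rewrite setCK flow_setC_sym piS_setC in flowCC.
rewrite /g_fun /f1 /f2 /f3 piS_setC.
have -> : flow pi P S S = piS pi S - flow pi P S (~: S) by rewrite -flowSS addrK.
have -> : flow pi P (~: S) (~: S) = 1 - piS pi S - flow pi P S (~: S).
  by rewrite -flowCC addrK.
by field; lra.
Qed.

Lemma inv_piS_supermodular : supermodular_on (dom01 pi) (fun S => (piS pi S)^-1).
Proof.
move=> A B _ _ /andP[I_gt0 _] _; apply: lerD_inv_spread => //.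
- exact/piS_subset/subsetIl.
- exact/piS_subset/subsetIr.
- exact: sum_setIU.
Qed.

Lemma inv_piS_setC_supermodular :
  supermodular_on (dom01 pi) (fun S => (piS pi (~: S))^-1).
Proof. exact: supermodular_on_setC dom01_setC inv_piS_supermodular. Qed.

Lemma f1_supermodular : supermodular_on (dom01 pi) (f1 pi).
Proof.
have partial_fractions S : dom01 pi S ->
    (piS pi S * piS pi (~: S))^-1 = (piS pi S)^-1 + (piS pi (~: S))^-1.
  by rewrite /dom01 piS_setC => /andP[S_gt0 S_lt1]; field; lra.
move=> A B dA dB dI dU; rewrite /f1 !partial_fractions //.
have := inv_piS_supermodular _ _ dA dB dI dU.
have := inv_piS_setC_supermodular _ _ dA dB dI dU.
rewrite /=; lra.
Qed.

Lemma f3_supermodular : supermodular_on (dom01 pi) (f3 pi P).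
Proof.
have piSC_gt0 S : dom01 pi S -> 0 < piS pi (~: S).
  by move=> /dom01_setC /andP[].
apply: supermodular_onM.
- by move=> S /piSC_gt0 /ltW; rewrite invr_ge0.
- by move=> S _; apply: square_sum_ge0; apply: flow_weight_ge0.
- move=> A B dA dB sAB; rewrite lef_pV2 ?posrE ?piSC_gt0 //.
  by apply: piS_subset; rewrite setCS.
- by move=> A B _ _; apply: square_sum_subset; apply: flow_weight_ge0.
- exact: inv_piS_setC_supermodular.
- by move=> A B _ _ _ _; apply: square_sum_supermodular; apply: flow_weight_ge0.
Qed.

Lemma f2_supermodular : supermodular_on (dom01 pi) (f2 pi P).
Proof.
move=> A B dA dB dI dU.
have := supermodular_on_setC dom01_setC f3_supermodular _ _ dA dB dI dU.
by rewrite /f2 /f3 /= !setCK.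
Qed.

End ReversibleChain.

Theorem proposition4p13 (R : realFieldType) (n : nat) (pi : 'I_n -> R) (P : 'M[R]_n) :
  pos_prob_dist pi -> transition_matrix P -> reversible pi P ->
  (forall S : {set 'I_n}, S != set0 -> S != setT ->
     g_fun pi P S = f1 pi S - f2 pi P S - f3 pi P S) /\
  supermodular_on (dom01 pi) (f1 pi) /\
  supermodular_on (dom01 pi) (f2 pi P) /\
  supermodular_on (dom01 pi) (f3 pi P).
Proof.
move=> pi_dist P_stoch P_rev; split.
  by move=> S S_neq0 S_neqT; apply/g_fun_decomposition/dom01_proper.
split; first exact: f1_supermodular.
split; [exact: f2_supermodular | exact: f3_supermodular].
Qed.
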